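(* Let $\alpha$ be a composition of $n$ and $w\in\mathfrak S_n$ with $D(w)\subseteq D(\alpha)$. Then in $\mathbb{F}[x_1,\dots,x_n]$, \[ \overline\pi_w x_{D(\alpha)}=w\,x_{D(\alpha)}+\sum_{x^d\prec x_{D(\alpha)}}c_dx^d,\qquad c_d\in\mathbb{Z}. \] Moreover, $w\,x_{D(\alpha)}$ is a descent monomial if and only if $D(w)=D(\alpha)$.
   Context: $\mathbb{F}$ is a field; $\mathfrak S_n$ permutes $x_1,\dots,x_n$; $\pi_if=\frac{x_if-x_{i+1}s_i(f)}{x_i-x_{i+1}}$, $\overline\pi_i=\pi_i-1$, and $\overline\pi_w=\overline\pi_{i_1}\cdots\overline\pi_{i_k}$ for a reduced word $w=s_{i_1}\cdots s_{i_k}$ (well defined since the $\overline\pi_i$ satisfy the $0$-Hecke relations). For $I\subseteq[n-1]$, $x_I=\prod_{i\in I}x_1x_2\cdots x_i$. $D(w)=\{i:w(i)>w(i+1)\}$; for a composition $\alpha$, $D(\alpha)$ is its set of partial sums below $n$. A descent monomial is one of the form $u\,x_{D(u)}=\prod_{i\in D(u)}x_{u(1)}\cdots x_{u(i)}$ for some $u\in\mathfrak S_n$. For a weak composition $d=(d_1,\dots,d_n)$, $x^d=x_1^{d_1}\cdots x_n^{d_n}$ and $\lambda(d)$ is the weakly decreasing rearrangement of $d$; $x^d\prec x^e$ means $\lambda(d)<\lambda(e)$ in lexicographic order (and $\preceq$ allows equality of $\lambda$). Integer coefficients are interpreted via their images in $\mathbb{F}$. *)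

From HB Require Import structures.
From mathcomp Require Import all_boot all_order all_algebra all_fingroup.
From mathcomp Require Import mpoly.
From Stdlib Require Import ClassicalEpsilon.
Set Implicit Arguments. Unset Strict Implicit. Unset Printing Implicit Defensive.
Import GRing.Theory.
Local Open Scope ring_scope.

(* Conventions: variables x_1..x_n are 'X_0 .. 'X_(n-1) (0-based ordinals).
   Subsets of [n-1] (descent sets) are seqs of nats with 1-based values.
   A permutation w : 'S_n acts by x_i |-> x_{w(i)}  (this is msym w). *)

Section Defs.
Variables (F : fieldType) (n : nat).

(* successor ordinal: i.+1 when i.+1 < n (only used in that case) *)
Definition nxt (i : 'I_n) : 'I_n := insubd i i.+1.

(* the simple transposition s_{i+1} (paper's numbering) swapping x_{i+1}, x_{i+2} *)
Definition sgen (i : 'I_n) : 'S_n := tperm i (nxt i).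

(* isobaric divided difference pi_i f = (x_i f - x_{i+1} s_i f)/(x_i - x_{i+1}),
   defined as the (unique) exact quotient in F[x]. *)
Definition pi_op (i : 'I_n) (f : {mpoly F[n]}) : {mpoly F[n]} :=
  epsilon (inhabits 0) (fun g : {mpoly F[n]} =>
    ('X_i - 'X_(nxt i)) * g = 'X_i * f - 'X_(nxt i) * msym (sgen i) f).

Definition pibar_op (i : 'I_n) (f : {mpoly F[n]}) : {mpoly F[n]} :=
  pi_op i f - f.

Definition pibar_word (s : seq 'I_n) (f : {mpoly F[n]}) : {mpoly F[n]} :=
  foldr pibar_op f s.

(* number of inversions = Coxeter length *)
Definition inv_count (w : 'S_n) : nat :=
  #|[set p : 'I_n * 'I_n | (p.1 < p.2)%N && (w p.2 < w p.1)%N]|.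

(* s = (i_1,...,i_k) is a reduced word for w = s_{i_1} ... s_{i_k}
   (product as composition of functions: w(j) = s_{i_1}(...(s_{i_k}(j)))) *)
Definition reduced_word (w : 'S_n) (s : seq 'I_n) : Prop :=
  all (fun i : 'I_n => (i.+1 < n)%N) s /\
  (forall j : 'I_n, w j = foldr (fun i x => sgen i x) j s) /\
  size s = inv_count w.

Definition Des (w : 'S_n) : seq nat :=
  [seq (val i).+1 | i <- [seq i : 'I_n <- enum 'I_n | (i.+1 < n)%N && (w (nxt i) < w i)%N]].

Definition is_composition (alpha : seq nat) : bool :=
  all (fun a => 0 < a)%N alpha && (sumn alpha == n).

Definition Dcomp (alpha : seq nat) : seq nat :=
  [seq s <- [seq sumn (take k alpha) | k <- iota 1 (size alpha)] | (s < n)%N].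

Definition xI (I : seq nat) : {mpoly F[n]} :=
  \prod_(i <- I) \prod_(j < n | (j < i)%N) 'X_j.

Definition descent_monomial (p : {mpoly F[n]}) : Prop :=
  exists u : 'S_n, p = msym u (xI (Des u)).

Definition lam (d : 'X_{1..n}) : seq nat := sort geq [seq d i | i <- enum 'I_n].

End Defs.

Fixpoint lexlt (s t : seq nat) : bool :=
  match s, t with
  | a :: s', b :: t' => (a < b)%N || ((a == b) && lexlt s' t')
  | _, _ => false
  end.

Definition mprec (n : nat) (d e : 'X_{1..n}) : bool := lexlt (lam d) (lam e).

(* Weigh a monomial x^m by the power sum \sum_k B^(m_k) with B = n + 2: it is
   symmetric, and a smaller weight forces a lexicographically smaller sorted
   exponent vector, so it suffices to track weights.  For m_i > m_(i+1),
   pibar_i x^m is s_i x^m plus the monomials obtained by moving part of the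
   exponent of x_i to x_(i+1) strictly between the two; by strict convexity of
   k |-> B^k these weigh less than x^m.  Moreover pibar_i kills x^m when
   m_i = m_(i+1) and anticommutes with s_i, so pibar_i never raises the weight
   and has integer coefficients.  Since D(w) is contained in D(alpha), w is
   increasing on every block of equal exponents of x_D(alpha); hence along a
   reduced word each step meets a leading monomial with m_i > m_(i+1), which
   produces the leading term w x_D(alpha).  Conversely, if
   w x_D(alpha) = u x_D(u), the sorted exponent vectors agree, so
   x_D(alpha) = x_D(u), and w = u as both are the unique permutation
   increasing on the blocks; thus D(w) = D(alpha). *)

From HB Require Import structures.
From mathcomp Require Import all_boot all_order all_algebra all_fingroup.
From mathcomp Require Import mpoly.
From mathcomp Require Import zify ring.
From Stdlib Require Import ClassicalEpsilon.
Set Implicit Arguments. Unset Strict Implicit. Unset Printing Implicit Defensive.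
Import GRing.Theory.

Section SimpleTranspositions.
Variable n : nat.
Implicit Types (i a b : 'I_n) (u w : 'S_n).

Lemma nxtE i : (i.+1 < n)%N -> nxt i = i.+1 :> nat.
Proof. by move=> h; rewrite /nxt insubdK. Qed.

Lemma nxt_neq i : (i.+1 < n)%N -> i != nxt i.
Proof. by move=> h; apply/eqP=> /(congr1 val) /=; rewrite nxtE //=; lia. Qed.

Lemma mul_sgenK u i : (u * sgen i * sgen i)%g = u.
Proof. by apply/permP => x; rewrite !permM /sgen tpermK. Qed.

Lemma ltn_sgen i a b : (i.+1 < n)%N ->
  ~~ ((a == i) && (b == nxt i)) -> ~~ ((a == nxt i) && (b == i)) ->
  (sgen i a < sgen i b)%N = (a < b)%N.
Proof.
move=> h; rewrite /sgen; have hv := nxtE h.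
have ni : (nxt i == i) = false by rewrite eq_sym; apply/negbTE/nxt_neq.
case: tpermP => [->|->|/eqP ha /eqP hb]; case: tpermP => [->|->|/eqP ha' /eqP hb'];
  rewrite ?eqxx ?andbT ?andTb ?ni ?(negbTE (nxt_neq h)) //= => H1 H2; rewrite ?hv; try lia;
  [move: ha' hb' | move: ha' hb' | move: ha hb | move: ha hb];
  by rewrite -!(inj_eq val_inj) /= hv; lia.
Qed.

Definition inversions u := [set p : 'I_n * 'I_n | (p.1 < p.2)%N && (u p.2 < u p.1)%N].

Lemma inv_count_mul_sgen u i : (i.+1 < n)%N ->
  ((u^-1)%g i < (u^-1)%g (nxt i))%N -> inv_count (u * sgen i)%g = (inv_count u).+1.
Proof.
move=> h hlt; set p0 := (u^-1)%g i; set q0 := (u^-1)%g (nxt i).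
have up0 : u p0 = i by rewrite /p0 permKV.
have uq0 : u q0 = nxt i by rewrite /q0 permKV.
have hv := nxtE h.
change (#|inversions (u * sgen i)| = #|inversions u|.+1).
have -> : inversions (u * sgen i) = (p0, q0) |: inversions u.
  apply/setP => [[a b]]; rewrite !inE /= !permM.
  have [[-> ->]|hne] /= := eqVneq (a, b) (p0, q0).
    by rewrite hlt up0 uq0 /sgen tpermL tpermR hv ltnSn.
  have [/andP[/eqP ha /eqP hb]|h1] := boolP ((u a == i) && (u b == nxt i)).
    have ea : a = p0 by apply: (@perm_inj _ u); rewrite up0.
    have eb : b = q0 by apply: (@perm_inj _ u); rewrite uq0.
    by rewrite ea eb eqxx in hne.
  have [/andP[/eqP ha /eqP hb]|h2] := boolP ((u a == nxt i) && (u b == i)).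
    have ea : a = q0 by apply: (@perm_inj _ u); rewrite uq0.
    have eb : b = p0 by apply: (@perm_inj _ u); rewrite up0.
    by rewrite ea eb; move: hlt; rewrite /p0 /q0 => hlt; apply/idP/idP => /andP[H _]; lia.
  by rewrite ltn_sgen // andbC.
by rewrite cardsU1 inE /= up0 uq0 hv [(i.+1 < i)%N]ltnNge leqnSn andbF.
Qed.

Lemma inv_count_mul_sgen_cases u i : (i.+1 < n)%N ->
  if ((u^-1)%g i < (u^-1)%g (nxt i))%N then inv_count (u * sgen i)%g = (inv_count u).+1
  else (inv_count (u * sgen i)%g).+1 = inv_count u.
Proof.
move=> h; case: ifP => hlt; first exact: inv_count_mul_sgen.
rewrite -[in RHS](mul_sgenK u i); apply/esym/inv_count_mul_sgen => //.
rewrite invMg /sgen tpermV !permM tpermL tpermR.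
have hne : (u^-1)%g i != (u^-1)%g (nxt i) by rewrite (inj_eq (@perm_inj _ _)) nxt_neq.
by rewrite ltn_neqAle eq_sym hne /= leqNgt hlt.
Qed.

Lemma inv_count1 : inv_count (1 : 'S_n)%g = 0%N.
Proof.
apply/eqP; rewrite cards_eq0; apply/eqP/setP=> [[a b]].
by rewrite !inE !perm1 /=; apply/negbTE/negP => /andP[]; lia.
Qed.

Lemma inv_count_le_word (t : seq 'I_n) u : all (fun i : 'I_n => (i.+1 < n)%N) t ->
  (forall j, u j = foldr (fun i x => sgen i x) j t) -> (inv_count u <= size t)%N.
Proof.
elim: t u => [|i t IH] u /=.
  move=> _ hu; have -> : u = 1%g by apply/permP => j; rewrite hu perm1.
  by rewrite inv_count1.
move=> /andP[hi ha] hu.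
have /IH : forall j, (u * sgen i)%g j = foldr (fun i x => sgen i x) j t.
  by move=> j; rewrite permM hu /sgen tpermK.
have := inv_count_mul_sgen_cases (u * sgen i)%g hi; rewrite mul_sgenK.
by case: ifP => _; lia.
Qed.

Lemma reduced_word_cons w i t : reduced_word w (i :: t) ->
  [/\ (i.+1 < n)%N, reduced_word (w * sgen i)%g t &
      (((w * sgen i)^-1)%g i < ((w * sgen i)^-1)%g (nxt i))%N].
Proof.
case=> /= /andP[hi ha] [hw hs].
have hw' : forall j, (w * sgen i)%g j = foldr (fun i x => sgen i x) j t.
  by move=> j; rewrite permM hw /sgen tpermK.
have hle := inv_count_le_word ha hw'.
have := inv_count_mul_sgen_cases (w * sgen i)%g hi; rewrite mul_sgenK.
by case: ifP => hlt hc; [split => //; split => //; split => //; lia | exfalso; lia].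
Qed.

End SimpleTranspositions.

Lemma lexlt_total (p q : seq nat) : size p = size q -> [|| p == q, lexlt p q | lexlt q p].
Proof.
elim: p q => [|a p IH] [|b q] //= [hs].
case: (ltngtP a b) => [h|h|->] //=; rewrite ?orbT //.
by rewrite eqseq_cons eqxx /=; have := IH q hs.
Qed.

Section PowerSums.
Variable B : nat.
Hypothesis B_gt1 : (1 < B)%N.

Definition powsum (s : seq nat) : nat := sumn [seq B ^ x | x <- s].

Lemma powsum_le a s : all (fun x => x <= a)%N s -> (powsum s <= size s * B ^ a)%N.
Proof.
elim: s => [|x s IH] //= /andP[hx hs].
have := IH hs; have : (B ^ x <= B ^ a)%N by rewrite leq_exp2l //; lia.
rewrite /powsum /=; lia.
Qed.

(* With fewer than [B] parts, a unit increase of the first differing part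
   outweighs everything after it. *)
Lemma lexlt_powsum p q : size p = size q -> (size p < B)%N ->
  sorted geq p -> sorted geq q -> lexlt p q -> (powsum p < powsum q)%N.
Proof.
elim: p q => [|a p IH] [|b q] //= [hs] hsz hp hq.
rewrite /powsum /= -/(powsum p) -/(powsum q).
case/orP => [hab|/andP[/eqP <- hl]]; last first.
  by have := IH q hs (ltnW hsz) (path_sorted hp) (path_sorted hq) hl; lia.
have hpa : all (fun x => x <= a)%N p := order_path_min (rev_trans leq_trans) hp.
have h1 := powsum_le hpa.
have h2 : (B ^ a.+1 <= B ^ b)%N by rewrite leq_exp2l //; lia.
have h3 : ((size p).+1 * B ^ a < B * B ^ a)%N by rewrite ltn_pmul2r ?expn_gt0; lia.
rewrite expnS in h2; rewrite mulSn in h3; lia.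
Qed.

Lemma expn_convex a b x y : (b < x)%N -> (b < y)%N -> (x + y = a + b)%N ->
  (B ^ x + B ^ y < B ^ a + B ^ b)%N.
Proof.
move=> hx hy hs.
have ex : x = (b + (x - b))%N by lia.
have ea : a = (y + (x - b))%N by lia.
have hU : (B <= B ^ (x - b))%N by rewrite -{1}(expn1 B) leq_exp2l //; lia.
have hP : (B ^ b < B ^ y)%N by rewrite ltn_exp2l.
rewrite ea [in B ^ x]ex !expnD.
move: hU hP; set U := B ^ (x - b); set P := B ^ y; set Q := B ^ b => hU hP.
nia.
Qed.

End PowerSums.

Section MonomialWeight.
Variable n : nat.
Implicit Types (i j : 'I_n) (m d e : 'X_{1..n}).
Local Notation B := n.+2.

(* The base exceeds the number of parts, as [lexlt_powsum] requires. *)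
Definition mnm_powsum m : nat := (\sum_(k < n) B ^ m k)%N.

Lemma mnm_powsum_lam m : mnm_powsum m = powsum B (lam m).
Proof.
rewrite /powsum /lam (perm_sumn (perm_map _ (permEl (perm_sort _ _)))) -map_comp.
by rewrite sumnE big_map big_enum.
Qed.

Lemma size_lam m : size (lam m) = n.
Proof. by rewrite size_sort size_map size_enum_ord. Qed.

Lemma sorted_lam m : sorted geq (lam m).
Proof. by apply: sort_sorted => a b; exact: leq_total. Qed.

Lemma mnm_powsum_mprec d e : (mnm_powsum d < mnm_powsum e)%N -> mprec d e.
Proof.
rewrite /mprec !mnm_powsum_lam => h.
have hs : size (lam e) = size (lam d) by rewrite !size_lam.
case/or3P: (lexlt_total (esym hs)) => [/eqP he|//|hl]; first by rewrite he ltnn in h.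
have hB : (1 < B)%N by [].
have := lexlt_powsum hB hs _ (sorted_lam e) (sorted_lam d) hl.
by rewrite size_lam => /(_ (leqnSn _)); lia.
Qed.

Lemma mnm_powsum_perm m (s : 'S_n) : mnm_powsum [multinom m (s k) | k < n] = mnm_powsum m.
Proof.
rewrite /mnm_powsum [RHS](reindex_inj (@perm_inj _ s)).
by apply: eq_bigr => k _; rewrite mnmE.
Qed.

Definition mnm_set2 i j m (a b : nat) : 'X_{1..n} :=
  [multinom if k == i then a else if k == j then b else m k | k < n].

Lemma mnm_set2_id i j m : mnm_set2 i j m (m i) (m j) = m.
Proof.
apply/mnmP => k; rewrite mnmE.
by case: (eqVneq k i) => [->|_] //; case: (eqVneq k j) => [->|_].
Qed.

Lemma mnm_set2E1 i j m a b : mnm_set2 i j m a b i = a.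
Proof. by rewrite mnmE eqxx. Qed.

Lemma mnm_set2E2 i j m a b : i != j -> mnm_set2 i j m a b j = b.
Proof. by move=> hij; rewrite mnmE eq_sym (negbTE hij) eqxx. Qed.

Lemma mnm_powsum_set2 i j m a b : i != j ->
  (mnm_powsum (mnm_set2 i j m a b) + B ^ m i + B ^ m j = mnm_powsum m + B ^ a + B ^ b)%N.
Proof.
move=> hij; have hji : j != i by rewrite eq_sym.
rewrite /mnm_powsum (bigD1 i) // (bigD1 j) //= ?(negbTE hij) //.
rewrite [\sum_(k < n) B ^ m k](bigD1 i) // [\sum_(k < n | k != i) B ^ m k](bigD1 j) //=.
rewrite !mnmE eqxx (negbTE hji) eqxx.
rewrite (eq_bigr (fun k => B ^ m k)) => [|k /andP[hi hj]]; last first.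
  by rewrite mnmE (negbTE hi) (negbTE hj).
set S := (\sum_(k < n | (k != i) && (k != j)) B ^ m k)%N.
lia.
Qed.

Lemma mnm_powsum_swap i j m : i != j -> mnm_powsum (mnm_set2 i j m (m j) (m i)) = mnm_powsum m.
Proof. by move=> hij; have := mnm_powsum_set2 m (m j) (m i) hij; lia. Qed.

End MonomialWeight.

Section DescentExponents.
Variable n : nat.
Implicit Types (D : seq nat) (i k p q : 'I_n) (u w : 'S_n) (e : 'X_{1..n}).

Definition xI_mnm D : 'X_{1..n} := [multinom count (fun t => (k < t)%N) D | k < n].

Lemma xI_mnm_nonincr D p q : (p <= q)%N -> (xI_mnm D q <= xI_mnm D p)%N.
Proof. by move=> h; rewrite !mnmE; apply: sub_count => t /=; lia. Qed.

Lemma xI_mnm_step D k (k1 : 'I_n) : k1 = k.+1 :> nat ->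
  xI_mnm D k = (xI_mnm D k1 + count_mem k.+1 D)%N.
Proof.
move=> hk; rewrite !mnmE hk; elim: D => [|t D IH] //=; rewrite IH.
have [->|ne] /= := eqVneq t k.+1; first by rewrite ltnSn ltnn; lia.
have -> : (k < t)%N = (k.+1 < t)%N by move: ne => /eqP; lia.
lia.
Qed.

Lemma mem_xI_mnm D k (k1 : 'I_n) : k1 = k.+1 :> nat -> (k.+1 \in D) = (xI_mnm D k != xI_mnm D k1).
Proof.
move=> hk; rewrite (xI_mnm_step D hk) -[X in _ != X]addn0 eqn_add2l.
by rewrite -lt0n -has_count has_pred1.
Qed.

Lemma mem_Des w k (k1 : 'I_n) : k1 = k.+1 :> nat -> (w k1 < w k)%N -> k.+1 \in Des w.
Proof.
move=> hk hw; apply/mapP; exists k => //; rewrite mem_filter mem_enum andbT.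
have hn : (k.+1 < n)%N by rewrite -hk ltn_ord.
have -> : nxt k = k1 by apply: val_inj; rewrite /= nxtE.
by rewrite hn hw.
Qed.

Lemma DesP w t : t \in Des w ->
  exists k k1, [/\ k1 = k.+1 :> nat, t = k.+1 & (w k1 < w k)%N].
Proof.
case/mapP => k; rewrite mem_filter mem_enum andbT => /andP[hn hw] ->.
by exists k, (nxt k); rewrite nxtE.
Qed.

Lemma Des_range w t : t \in Des w -> (0 < t < n)%N.
Proof. by case/DesP => k [k1 [hk -> _]]; have := ltn_ord k1; lia. Qed.

Lemma Des_uniq w : uniq (Des w).
Proof.
rewrite map_inj_uniq ?filter_uniq -?enumT ?enum_uniq //.
by move=> a b [] /val_inj.
Qed.

Definition incr_on_levels e w :=
  forall p q, (p < q)%N -> e p = e q -> (w p < w q)%N.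

(* Equal exponents of [x_D] at [k] and [k+1] mean [k+1 \notin D], hence [k+1]
   is not a descent of [w]. *)
Lemma incr_on_levels_xI_mnm D w : {subset Des w <= D} -> incr_on_levels (xI_mnm D) w.
Proof.
move=> hsub.
have adj k (k1 : 'I_n) : k1 = k.+1 :> nat -> xI_mnm D k = xI_mnm D k1 -> (w k < w k1)%N.
  move=> hk he; have hD : k.+1 \notin D by rewrite (mem_xI_mnm D hk) he eqxx.
  have hne : w k != w k1.
    by rewrite (inj_eq (@perm_inj _ _)) -(inj_eq val_inj) /= hk ltn_eqF.
  rewrite ltn_neqAle hne leqNgt; apply: contra hD => hlt.
  exact/hsub/(mem_Des hk).
move=> p q hpq; have [d hq] : exists d, q = (p + d.+1)%N :> nat by exists (q - p.+1)%N; lia.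
elim: d q hq {hpq} => [|d IH] q hq he; first by apply: adj => //; lia.
have hq1 : (p + d.+1 < n)%N by have := ltn_ord q; lia.
have e1 : xI_mnm D p = xI_mnm D (Ordinal hq1).
  apply/eqP; rewrite eqn_leq andbC xI_mnm_nonincr /=; last lia.
  by rewrite he xI_mnm_nonincr //= hq; lia.
apply: (ltn_trans (IH (Ordinal hq1) erefl e1)); apply: adj => /=; [lia | by rewrite -e1].
Qed.

Lemma incr_on_levels_mul_sgen e w i : (i.+1 < n)%N ->
  ((w^-1)%g i < (w^-1)%g (nxt i))%N -> incr_on_levels e (w * sgen i)%g ->
  incr_on_levels e w.
Proof.
move=> hi hlt hinc p q hpq hepq.
have [/andP[/eqP-> /eqP->]|h1] := boolP ((w p == i) && (w q == nxt i)); first by rewrite nxtE.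
have [/andP[/eqP hp /eqP hq]|h2] := boolP ((w p == nxt i) && (w q == i)).
  by move: hlt; rewrite -hp -hq !permK ltnNge (ltnW hpq).
by rewrite -(ltn_sgen hi h1 h2) -!permM; apply: hinc.
Qed.

Lemma sorted_nonincr_enum (f : 'I_n -> nat) :
  (forall p q, (p <= q)%N -> (f q <= f p)%N) -> sorted geq [seq f i | i <- enum 'I_n].
Proof.
move=> hf; rewrite sorted_map.
have : sorted (relpre val ltn) (enum 'I_n) by rewrite -sorted_map val_enum_ord iota_ltn_sorted.
by apply: sub_sorted => a b /= /ltnW; apply: hf.
Qed.

Lemma nonincr_perm_eq (f g : 'I_n -> nat) (s : 'S_n) :
  (forall p q, (p <= q)%N -> (f q <= f p)%N) ->
  (forall p q, (p <= q)%N -> (g q <= g p)%N) ->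
  (forall j, f j = g (s j)) -> f =1 g.
Proof.
move=> hf hg hfg.
have hp : perm_eq [seq f i | i <- enum 'I_n] [seq g i | i <- enum 'I_n].
  rewrite (eq_map hfg) map_comp; apply: perm_map.
  apply: uniq_perm; [by rewrite map_inj_uniq ?enum_uniq //; exact: perm_inj|exact: enum_uniq|].
  move=> x; rewrite mem_enum; apply/mapP; exists ((s^-1)%g x); first by rewrite mem_enum.
  by rewrite permKV.
have anti : antisymmetric geq by move=> a b /andP[h1 h2]; apply/eqP; rewrite eqn_leq; exact/andP.
have := sorted_eq (rev_trans leq_trans) anti (sorted_nonincr_enum hf) (sorted_nonincr_enum hg) hp.
by move=> /eq_in_map E j; apply: E; rewrite mem_enum.
Qed.

(* Look at the least point moved by [s]. *)
Lemma perm_incr_on_levels_id e (s : 'S_n) :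
  (forall j, e (s j) = e j) -> incr_on_levels e s -> s = 1%g.
Proof.
move=> he hmon; apply/permP => j; rewrite perm1.
elim: j.+1 {-2}j (ltnSn j) => {j} [|N IH] j hj //.
have [hlt|hgt|/val_inj //] := ltngtP (s j) j.
- have /perm_inj ssj : s (s j) = s j by apply: IH; lia.
  by rewrite ssj ltnn in hlt.
- set k := (s^-1)%g j; have sk : s k = j by rewrite /k permKV.
  have [hk|hk|/val_inj ekj] := ltngtP k j.
  + by have := IH k ltac:(lia); rewrite sk => ejk; rewrite -ejk ltnn in hk.
  + by have := hmon j k hk; rewrite -[e k]he sk => /(_ erefl); lia.
  + by rewrite -ekj sk ekj ltnn in hgt.
Qed.

Lemma incr_on_levels_eq e w u : incr_on_levels e w -> incr_on_levels e u ->
  (forall j, e ((w * u^-1)%g j) = e j) -> w = u.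
Proof.
move=> hw hu he; set s := (w * u^-1)%g in he.
have hsw j : u (s j) = w j by rewrite permM permKV.
suff s1 : s = 1%g by apply/permP => j; rewrite -hsw s1 perm1.
apply: (perm_incr_on_levels_id he) => p q hpq hepq.
have := hw p q hpq hepq; rewrite -!hsw.
have [//|h|/val_inj/perm_inj epq] := ltngtP (s p) (s q); last by rewrite epq ltnn in hpq.
by have := hu _ _ h; rewrite !he -hepq => /(_ erefl); lia.
Qed.

End DescentExponents.

Section Compositions.
Implicit Types (al : seq nat).

Lemma sumn_takeS al k : (k < size al)%N ->
  sumn (take k.+1 al) = (sumn (take k al) + nth 0 al k)%N.
Proof. by move=> h; rewrite (take_nth 0 h) sumn_rcons. Qed.

Lemma sumn_take_ltn al k l : all (fun a => 0 < a)%N al -> (k < l <= size al)%N ->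
  (sumn (take k al) < sumn (take l al))%N.
Proof.
move=> hpos; elim: l => [|l IH] // /andP[hkl hl].
rewrite sumn_takeS //; have : (0 < nth 0 al l)%N by apply/(allP hpos)/mem_nth.
move: hkl; rewrite ltnS leq_eqVlt => /orP[/eqP->|hkl]; first lia.
by have := IH; rewrite hkl ltnW //=; lia.
Qed.

Lemma leq_sumn_take al k : all (fun a => 0 < a)%N al -> (k <= size al)%N ->
  (k <= sumn (take k al))%N.
Proof.
move=> hpos; elim: k => [|k IH] // hk.
rewrite sumn_takeS //; have : (0 < nth 0 al k)%N by apply/(allP hpos)/mem_nth.
by have := IH (ltnW hk); lia.
Qed.

Lemma Dcomp_uniq n al : is_composition n al -> uniq (Dcomp n al).
Proof.
case/andP => hpos _; apply: filter_uniq; rewrite map_inj_in_uniq ?iota_uniq //.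
move=> k l; rewrite !mem_iota => hk hl; apply: contra_eq => hne.
have [hkl|hlk|/eqP] := ltngtP k l; last by rewrite (negbTE hne).
- by rewrite neq_ltn sumn_take_ltn // hkl /=; lia.
- by rewrite neq_ltn orbC sumn_take_ltn // hlk /=; lia.
Qed.

Lemma Dcomp_range n al t : is_composition n al -> t \in Dcomp n al -> (0 < t < n)%N.
Proof.
case/andP => hpos _; rewrite mem_filter => /andP[htn /mapP[k]].
rewrite mem_iota => hk et; subst t; rewrite htn andbT.
by have := leq_sumn_take hpos (k := k) ltac:(lia); lia.
Qed.

End Compositions.

Local Open Scope ring_scope.

Section IsobaricDividedDifferences.
Variables (F : fieldType) (n : nat).
Implicit Types (f g : {mpoly F[n]}) (m : 'X_{1..n}) (i j : 'I_n).

Lemma mpolyX_inj : injective (fun m => 'X_[m] : {mpoly F[n]}).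
Proof. by move=> m1 m2 /(congr1 (@msupp n F)); rewrite !msuppX => -[]. Qed.

Lemma mpolyXB_neq0 i j : i != j -> ('X_i - 'X_j : {mpoly F[n]}) != 0.
Proof.
move=> hij; apply: contra_neq (@oner_neq0 F) => /(congr1 (mcoeff U_(i))).
by rewrite mcoeffB !mcoeffXU eqxx eq_sym (negbTE hij) subr0 mcoeff0.
Qed.

Lemma msym_sgenK i : involutive (msym (sgen i) : {mpoly F[n]} -> {mpoly F[n]}).
Proof. by move=> f; rewrite -msymMm -[X in msym X]mul1g mulgA mul_sgenK msym1m. Qed.

Definition is_pi_quot i f g :=
  ('X_i - 'X_(nxt i)) * g = 'X_i * f - 'X_(nxt i) * msym (sgen i) f.

Lemma is_pi_quot0 i : is_pi_quot i 0 0.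
Proof. by rewrite /is_pi_quot msym0 !mulr0 subrr. Qed.

Lemma is_pi_quotD i f1 f2 g1 g2 :
  is_pi_quot i f1 g1 -> is_pi_quot i f2 g2 -> is_pi_quot i (f1 + f2) (g1 + g2).
Proof. by rewrite /is_pi_quot msymD mulrDr => -> ->; ring. Qed.

Lemma is_pi_quotZ i c f g : is_pi_quot i f g -> is_pi_quot i (c *: f) (c *: g).
Proof. by rewrite /is_pi_quot msymZ -!scalerAr => ->; rewrite scalerBr. Qed.

Lemma is_pi_quot_sgen i f g : is_pi_quot i f g ->
  is_pi_quot i (msym (sgen i) f) (f + msym (sgen i) f - g).
Proof. by rewrite /is_pi_quot msym_sgenK mulrBr => ->; ring. Qed.

Lemma mpolyX_set2 i j m a b : i != j ->
  'X_[mnm_set2 i j m a b] = 'X_[mnm_set2 i j m 0 0] * 'X_i ^+ a * 'X_j ^+ b :> {mpoly F[n]}.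
Proof.
move=> hij; rewrite !mpolyXn -!mpolyXD; congr 'X_[_]; apply/mnmP => k.
rewrite !mnmDE !mulmnE !mnmE.
have [->|hki] := eqVneq k i; first by rewrite eq_sym (negbTE hij) /=; lia.
by rewrite [j == k]eq_sym; case: (k == j) => /=; lia.
Qed.

Lemma msym_set2 i m a b : (i.+1 < n)%N ->
  msym (sgen i) 'X_[mnm_set2 i (nxt i) m a b]
  = 'X_[mnm_set2 i (nxt i) m b a] :> {mpoly F[n]}.
Proof.
move=> hi; have hij := nxt_neq hi; rewrite msymX; congr 'X_[_].
apply/mnmP => k; rewrite !mnmE /sgen tpermV.
have hji : (nxt i == i) = false by rewrite eq_sym (negbTE hij).
by case: tpermP => [->|->|/eqP/negbTE -> /eqP/negbTE ->]; rewrite ?eqxx ?hji.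
Qed.

Lemma msym_set2_swap i m : (i.+1 < n)%N ->
  msym (sgen i) 'X_[mnm_set2 i (nxt i) m (m (nxt i)) (m i)] = 'X_[m] :> {mpoly F[n]}.
Proof. by move=> hi; rewrite msym_set2 // mnm_set2_id. Qed.

Lemma is_pi_quot_mon i m : (i.+1 < n)%N -> (m (nxt i) <= m i)%N ->
  is_pi_quot i 'X_[m]
    (\sum_(k < (m i - m (nxt i)).+1) 'X_[mnm_set2 i (nxt i) m (m i - k) (m (nxt i) + k)]).
Proof.
move=> hi hba; have hij := nxt_neq hi.
rewrite /is_pi_quot; set j := nxt i in hij hba *.
set a := m i; set b := m j; set c := (a - b)%N.
set x : {mpoly F[n]} := 'X_i; set y : {mpoly F[n]} := 'X_j.
set M : {mpoly F[n]} := 'X_[mnm_set2 i j m 0 0].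
have ea : a = (b + c)%N by rewrite /c; lia.
have hX : 'X_[m] = M * x ^+ a * y ^+ b by rewrite -{1}(mnm_set2_id i j m) mpolyX_set2.
have hsX : msym (sgen i) 'X_[m] = M * x ^+ b * y ^+ a.
  by rewrite -{1}(mnm_set2_id i j m) msym_set2 // mpolyX_set2.
rewrite (eq_bigr (fun k : 'I_c.+1 => M * (x * y) ^+ b * (x ^+ (c - k) * y ^+ k))); last first.
  move=> k _; rewrite mpolyX_set2 // -/M -/x -/y.
  have -> : (a - k = b + (c - k))%N by have := ltn_ord k; lia.
  by rewrite !exprD exprMn; ring.
rewrite -mulr_sumr hsX hX mulrCA -subrXX ea !exprD exprMn !exprS; ring.
Qed.

Lemma exists_pi_quot i f : (i.+1 < n)%N -> exists g, is_pi_quot i f g.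
Proof.
move=> hi; have mon m : exists g, is_pi_quot i 'X_[m] g.
  have [hba|hab] := leqP (m (nxt i)) (m i); first by eexists; exact: is_pi_quot_mon.
  rewrite -(msym_set2_swap m hi); eexists; apply/is_pi_quot_sgen/is_pi_quot_mon => //.
  by rewrite mnm_set2E1 mnm_set2E2 ?(ltnW hab) // nxt_neq.
rewrite [f]mpolyE; elim: (msupp f) => [|m r [g hg]].
  by exists 0; rewrite big_nil; exact: is_pi_quot0.
have [g1 hg1] := mon m.
by exists (f@_m *: g1 + g); rewrite big_cons; apply/is_pi_quotD/hg/is_pi_quotZ.
Qed.

Lemma pi_op_quot i f : (i.+1 < n)%N -> is_pi_quot i f (pi_op i f).
Proof. by move=> hi; apply: epsilon_spec; exact: exists_pi_quot. Qed.

Lemma pi_op_eq i f g : (i.+1 < n)%N -> is_pi_quot i f g -> pi_op i f = g.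
Proof.
move=> hi hg; apply/eqP; rewrite -subr_eq0.
have : ('X_i - 'X_(nxt i)) * (pi_op i f - g) = 0 by rewrite mulrBr hg pi_op_quot // subrr.
by move/eqP; rewrite mulf_eq0 (negbTE (mpolyXB_neq0 (nxt_neq hi))).
Qed.

Lemma pi_op_mon i m : (i.+1 < n)%N -> (m (nxt i) <= m i)%N ->
  pi_op i ('X_[m] : {mpoly F[n]})
  = \sum_(k < (m i - m (nxt i)).+1) 'X_[mnm_set2 i (nxt i) m (m i - k) (m (nxt i) + k)].
Proof. by move=> hi hba; apply/pi_op_eq/is_pi_quot_mon. Qed.

Lemma pibar_op_mon i m : (i.+1 < n)%N -> (m (nxt i) <= m i)%N ->
  pibar_op i ('X_[m] : {mpoly F[n]})
  = \sum_(k < m i - m (nxt i)) 'X_[mnm_set2 i (nxt i) m (m i - k.+1) (m (nxt i) + k.+1)].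
Proof.
move=> hi hba; rewrite /pibar_op pi_op_mon // big_ord_recl /= subn0 addn0 mnm_set2_id.
by rewrite addrC addKr.
Qed.

Lemma pibar_opD i f g : (i.+1 < n)%N ->
  pibar_op i (f + g) = pibar_op i f + pibar_op i g.
Proof.
move=> hi; rewrite /pibar_op.
by rewrite (pi_op_eq hi (is_pi_quotD (pi_op_quot f hi) (pi_op_quot g hi))); ring.
Qed.

Lemma pibar_opZ i c f : (i.+1 < n)%N -> pibar_op i (c *: f) = c *: pibar_op i f.
Proof.
by move=> hi; rewrite /pibar_op (pi_op_eq hi (is_pi_quotZ c (pi_op_quot f hi))) scalerBr.
Qed.

Lemma pibar_op_sum i (r : seq 'X_{1..n}) (c : 'X_{1..n} -> F) : (i.+1 < n)%N ->
  pibar_op i (\sum_(m <- r) c m *: 'X_[m]) = \sum_(m <- r) c m *: pibar_op i 'X_[m].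
Proof.
move=> hi; elim: r => [|m r IH].
  by rewrite !big_nil /pibar_op (pi_op_eq hi (is_pi_quot0 i)) subrr.
by rewrite !big_cons pibar_opD // pibar_opZ // IH.
Qed.

Lemma pibar_op_sgen i f : (i.+1 < n)%N -> pibar_op i (msym (sgen i) f) = - pibar_op i f.
Proof.
by move=> hi; rewrite /pibar_op (pi_op_eq hi (is_pi_quot_sgen (pi_op_quot f hi))); ring.
Qed.

End IsobaricDividedDifferences.

Section LowerTerms.
Variables (F : fieldType) (n : nat).
Implicit Types (p q : {mpoly F[n]}) (m : 'X_{1..n}) (i : 'I_n) (K : nat).

Definition int_below K p :=
  forall d, exists2 c : int, p@_d = c%:~R & ((K <= mnm_powsum d)%N -> c = 0).

Lemma int_below0 K : int_below K 0.
Proof. by move=> d; exists 0; rewrite ?mcoeff0. Qed.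

Lemma int_belowD K p q : int_below K p -> int_below K q -> int_below K (p + q).
Proof.
move=> hp hq d; have [c1 h1 h1'] := hp d; have [c2 h2 h2'] := hq d.
by exists (c1 + c2); rewrite ?mcoeffD ?h1 ?h2 ?rmorphD // => h; rewrite h1' ?h2'.
Qed.

Lemma int_belowN K p : int_below K p -> int_below K (- p).
Proof.
move=> hp d; have [c h h'] := hp d.
by exists (- c); rewrite ?mcoeffN ?h ?rmorphN // => /h' ->.
Qed.

Lemma int_belowZ K (z : int) p : int_below K p -> int_below K (z%:~R *: p).
Proof.
move=> hp d; have [c h h'] := hp d.
by exists (z * c); rewrite ?mcoeffZ ?h ?rmorphM // => /h' ->; rewrite mulr0.
Qed.

Lemma int_belowX K m : (mnm_powsum m < K)%N -> int_below K 'X_[m].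
Proof.
move=> hm d; rewrite mcoeffX; have [<-|_] := eqVneq m d; last by exists 0.
by exists 1 => // hK; have := leq_ltn_trans hK hm; rewrite ltnn.
Qed.

Lemma int_below_sum K (I : Type) (r : seq I) (P : pred I) (E : I -> {mpoly F[n]}) :
  (forall k, P k -> int_below K (E k)) -> int_below K (\sum_(k <- r | P k) E k).
Proof. by move=> h; elim/big_ind: _ => //; [exact: int_below0 | exact: int_belowD]. Qed.

Lemma int_below_leq K K' p : (K <= K')%N -> int_below K p -> int_below K' p.
Proof. by move=> hK hp d; have [c h h'] := hp d; exists c => // /(leq_trans hK). Qed.

Lemma int_below_msupp K p d : int_below K p -> d \in msupp p -> (mnm_powsum d < K)%N.
Proof.
rewrite mcoeff_msupp => /(_ d) [c -> h]; rewrite ltnNge; apply: contra => /h ->.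
by rewrite mulr0z.
Qed.

(* Strict convexity of [k |-> B ^ k]: moving exponent from [x_i] towards
   [x_(i+1)], without reaching the swap, lowers the weight. *)
Lemma mnm_powsum_pibar_term i m k : (i.+1 < n)%N -> (k.+1 < m i - m (nxt i))%N ->
  (mnm_powsum (mnm_set2 i (nxt i) m (m i - k.+1) (m (nxt i) + k.+1)) < mnm_powsum m)%N.
Proof.
move=> hi hk; have := mnm_powsum_set2 m (m i - k.+1) (m (nxt i) + k.+1) (nxt_neq hi).
have := @expn_convex n.+2 isT (m i) (m (nxt i)) (m i - k.+1) (m (nxt i) + k.+1).
by move=> /(_ ltac:(lia) ltac:(lia) ltac:(lia)); lia.
Qed.

Lemma pibar_op_lead i m : (i.+1 < n)%N -> (m (nxt i) < m i)%N ->
  exists2 r, pibar_op i ('X_[m] : {mpoly F[n]}) = msym (sgen i) 'X_[m] + r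
           & int_below (mnm_powsum m) r.
Proof.
move=> hi hlt; rewrite pibar_op_mon ?(ltnW hlt) //.
have -> : (m i - m (nxt i) = (m i - m (nxt i)).-1.+1)%N by lia.
rewrite big_ord_recr /= addrC; eexists.
  congr (_ + _); rewrite -[in RHS](mnm_set2_id i (nxt i) m) msym_set2 //.
  by congr 'X_[mnm_set2 _ _ _ _ _]; lia.
apply: int_below_sum => k _; apply/int_belowX/mnm_powsum_pibar_term => //=.
by have := ltn_ord k; lia.
Qed.

Lemma int_below_pibar_mon i m K : (i.+1 < n)%N -> (mnm_powsum m < K)%N ->
  int_below K (pibar_op i 'X_[m]).
Proof.
move=> hi; have hij := nxt_neq hi.
wlog hle : m / (m (nxt i) <= m i)%N.
  move=> H hK; have [/H|hlt] := leqP (m (nxt i)) (m i); first exact.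
  rewrite -(msym_set2_swap F m hi) pibar_op_sgen //; apply/int_belowN/H.
  - by rewrite mnm_set2E1 mnm_set2E2 // ltnW.
  - by rewrite mnm_powsum_swap.
move=> hK; rewrite leq_eqVlt in hle; case/orP: hle => [/eqP heq|hlt].
  by rewrite pibar_op_mon ?heq ?subnn ?big_ord0 //; exact: int_below0.
have [r -> hr] := pibar_op_lead hi hlt.
apply: int_belowD; last exact: int_below_leq (ltnW hK) hr.
by rewrite msymX; apply: int_belowX; rewrite mnm_powsum_perm.
Qed.

Lemma int_below_pibar i K p : (i.+1 < n)%N -> int_below K p -> int_below K (pibar_op i p).
Proof.
move=> hi hp; rewrite (mpolyE p) pibar_op_sum // big_seq; apply: int_below_sum => m hm.
have [c hc _] := hp m; rewrite hc; apply/int_belowZ/int_below_pibar_mon => //.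
exact: int_below_msupp hp hm.
Qed.

End LowerTerms.

Section LeadingTerm.
Variables (F : fieldType) (n : nat).

Lemma pibar_word_lead (e : 'X_{1..n}) :
  (forall p q : 'I_n, (p <= q)%N -> (e q <= e p)%N) ->
  forall s w, reduced_word w s -> incr_on_levels e w ->
  exists2 r : {mpoly F[n]}, pibar_word s 'X_[e] = msym w 'X_[e] + r
                         & int_below (mnm_powsum e) r.
Proof.
move=> hdec; elim => [|i s IH] w hred hinc.
  case: hred => _ [hw _]; have -> : w = 1%g by apply/permP => j; rewrite hw perm1.
  by exists 0; [rewrite msym1m addr0 | exact: int_below0].
have [hi hred' hlt] := reduced_word_cons hred.
set w' := (w * sgen i)%g in hred' hlt.
have ew : w = (w' * sgen i)%g by rewrite mul_sgenK.
have hinc' : incr_on_levels e w'.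
  by apply: (incr_on_levels_mul_sgen hi hlt); rewrite -ew.
have [r' hr' hlow'] := IH w' hred' hinc'.
set p0 := (w'^-1)%g i in hlt; set q0 := (w'^-1)%g (nxt i) in hlt.
set m := [multinom e ((w'^-1)%g k) | k < n].
have hm : msym w' 'X_[e] = 'X_[m] :> {mpoly F[n]} by rewrite msymX.
(* Were [e p0 = e q0], [w] would keep [p0 < q0] in order, yet it sends them
     to [i+1] and [i]. *)
have hmlt : (m (nxt i) < m i)%N.
  rewrite !mnmE -/p0 -/q0 ltn_neqAle hdec ?(ltnW hlt) // andbT.
  apply/eqP => heq; have := hinc p0 q0 hlt (esym heq).
  have hwx x : w x = sgen i (w' x) by rewrite {1}ew permM.
  by rewrite !hwx /p0 /q0 !permKV /sgen tpermL tpermR nxtE // ltnNge leqnSn.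
have [r1 hr1 hlow1] := pibar_op_lead F hi hmlt.
exists (r1 + pibar_op i r'); last first.
  by apply: int_belowD; [rewrite mnm_powsum_perm in hlow1 | exact: int_below_pibar hlow'].
by rewrite /= hr' pibar_opD // hm hr1 -hm -msymMm -ew; ring.
Qed.

End LeadingTerm.

Section DescentMonomials.
Variables (F : fieldType) (n : nat).
Implicit Types (D : seq nat) (u w : 'S_n).

Lemma xIE D : xI F n D = 'X_[xI_mnm n D].
Proof.
elim: D => [|t D IH].
  by rewrite /xI big_nil -mpolyX0; congr 'X_[_]; apply/mnmP => k; rewrite !mnmE.
rewrite /xI big_cons -/(xI F n D) IH mprodXE -mpolyXD; congr 'X_[_].
apply/mnmP => k; rewrite mnmDE mnm_sumE !mnmE /=.
have [hkt|hkt] := ltnP k t.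
  rewrite (bigD1 k) //= big1 ?addn0 /mnm1 ?mnmE ?eqxx //.
  by move=> j /andP[_ hj]; rewrite mnmE (negbTE hj).
rewrite big1 //= => j hj; rewrite /mnm1 mnmE; apply/eqP; rewrite eqb0; apply/eqP => ejk.
by move: hj hkt; rewrite ejk; lia.
Qed.

Lemma descent_monomial_Des_eq D w : uniq D -> Des w =i D ->
  descent_monomial (msym w (xI F n D)).
Proof.
move=> hD heq; exists w; congr (msym w _); apply: perm_big.
by apply: uniq_perm => //; exact: Des_uniq.
Qed.

Lemma Des_eq_descent_monomial D w : {in D, forall t, 0 < t < n}%N ->
  {subset Des w <= D} -> descent_monomial (msym w (xI F n D)) -> Des w =i D.
Proof.
move=> hD hsub [u]; rewrite !xIE !msymX => /mpolyX_inj /mnmP hu.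
have hwu j : xI_mnm n D j = xI_mnm n (Des u) ((w * u^-1)%g j).
  by have := hu (w j); rewrite !mnmE permK permM.
have heq := nonincr_perm_eq (xI_mnm_nonincr D) (xI_mnm_nonincr (Des u)) hwu.
have incu : incr_on_levels (xI_mnm n D) u.
  by move=> p q; rewrite !heq; exact: incr_on_levels_xI_mnm.
have ewu : w = u.
  by apply: (incr_on_levels_eq (incr_on_levels_xI_mnm hsub) incu) => j; rewrite heq -hwu.
subst u => t; have [/andP[ht0 htn]|hnt] := boolP (0 < t < n)%N; last first.
  by apply/idP/idP => [/Des_range|/hD] ht; rewrite ht in hnt.
have hk : (t.-1 < n)%N by lia.
have ek : Ordinal htn = (Ordinal hk).+1 :> nat by rewrite /= prednK.
by rewrite -[t]/(Ordinal htn : nat) ek !(mem_xI_mnm _ ek) !heq.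
Qed.

End DescentMonomials.

Theorem lemma4p1 (F : fieldType) (n : nat) (alpha : seq nat) (w : 'S_n)
    (s : seq 'I_n) :
  is_composition n alpha ->
  {subset Des w <= Dcomp n alpha} ->
  reduced_word w s ->
  (exists r : {mpoly F[n]},
     pibar_word s (xI F n (Dcomp n alpha))
       = msym w (xI F n (Dcomp n alpha)) + r /\
     (forall d, d \in msupp r ->
        forall e, e \in msupp (xI F n (Dcomp n alpha)) -> mprec d e) /\
     (forall d, exists c : int, r@_d = c%:~R)) /\
  (descent_monomial (msym w (xI F n (Dcomp n alpha))) <->
     Des w =i Dcomp n alpha).
Proof.
move=> hcomp hsub hred; set D := Dcomp n alpha.
have [r hr hlow] :=
  pibar_word_lead F (xI_mnm_nonincr D) hred (incr_on_levels_xI_mnm hsub).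
split; first exists r.
  rewrite xIE; split=> //; split=> [d hd e|d]; last by have [c] := hlow d; exists c.
  by rewrite msuppX inE => /eqP ->; apply/mnm_powsum_mprec/(int_below_msupp hlow).
split; first exact: Des_eq_descent_monomial (fun t => Dcomp_range (t := t) hcomp) hsub.
by move=> heq; apply: descent_monomial_Des_eq (Dcomp_uniq hcomp) heq.
Qed.
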